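(* Let $A\in\mathbb{R}^{n\times n}$ be symmetric and let $V_k=[v_1,\ldots,v_k]$ ($v_j\in\mathbb{R}^{n\times p}$, $v_0=0$), $v_{k+1}\in\mathbb{R}^{n\times p}$, $\beta_{k+1}^{FP}\in\mathbb{R}^{p\times p}$ and the symmetric block tridiagonal matrix $T_k\in\mathbb{R}^{kp\times kp}$ (diagonal blocks $\alpha_1,\ldots,\alpha_k$, subdiagonal blocks $\beta_2,\ldots,\beta_k$, superdiagonal blocks $\beta_j^T$) be the quantities obtained after $k$ iterations of the finite precision block Lanczos algorithm applied to $A$ and an initial block vector $v$, satisfying \[ AV_k=V_kT_k+v_{k+1}\beta_{k+1}^{FP}e_k^T+\Delta V_k,\qquad \Delta V_k=[\Delta v_1,\ldots,\Delta v_k], \] with $\|\Delta v_j\|\le\mathcal{O}(\epsilon)\|A\|$ for $j=1,\ldots,k$, $\|v_{j+1}^Tv_{j+1}-I_p\|\le\mathcal{O}(\epsilon)$, $\|v_j^Tv_{j+1}\beta_{j+1}\|\le\mathcal{O}(\epsilon)\|A\|$ for $j=0,\ldots,k$ (with $\beta_{k+1}=\beta_{k+1}^{FP}$ here), and $\|\beta_{k+1}^{FP}\|\le\mathcal{O}(1)\|A\|$. Let $T_k=S_k\Theta_kS_k^T$ with $S_k^TS_k=I_{kp}$ be a spectral decomposition, with Ritz vectors $Z_k=V_kS_k$, and define $r_k^T=[v_k^TV_{k-1},0_p]$. Let $Z_m^{(k)}=V_kS_m^{(k)}$ be a selected subset of $m$ linearly independent Ritz vectors ($S_m^{(k)}$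 the corresponding columns of $S_k$), with QR factorization $Z_m^{(k)}=W_kR_k$, and let $\rho_k=\|R_k^{-1}\|$. Consider the continuation process started from $W_k$, $v_{k-1},v_k,\alpha_k,\beta_k$: with $P_1=W_kW_k^T$, $P_2=P_1+q_{k+1}q_{k+1}^T$, $P_j=P_2+q_{k+j-1}q_{k+j-1}^T$ ($j\ge3$), \[ \begin{aligned} q_{k+1}\beta_{k+1}&=(I_n-P_1)(Av_k-v_k\alpha_k-v_{k-1}\beta_k^T),\\ q_{k+2}\beta_{k+2}&=(I_n-P_2)(Aq_{k+1}-v_k\beta_{k+1}^T),\\ q_{k+j}\beta_{k+j}&=(I_n-P_j)(Aq_{k+j-1}-q_{k+j-2}\beta_{k+j-1}^T),\quad j\ge3, \end{aligned} \] where the columns of $q_{k+j}$ form an orthonormal basis of the column space of the right-hand side and $\beta_{k+j}$ has full row rank, and define the perturbations \[ h_k=P_1(Av_k-v_k\alpha_k-v_{k-1}\beta_k^T),\quad h_{k+1}=P_1(Aq_{k+1}-v_k\beta_{k+1}^T),\quad h_{k+j}=P_1Aq_{k+j}+q_{k+1}\beta_{k+1}v_k^Tq_{k+j}\ (j\ge2). \] Then \[ \begin{aligned} h_k&=W_kW_k^Tv_{k+1}\beta_{k+1}^{FP}+\Delta_0^{(k)},\\ h_{k+1}&=-W_kR_k^{-T}S_m^{(k)T}r_k\beta_{k+1}^T+\Delta_1^{(k)},\\ h_{k+j}&=q_{k+1}\beta_{k+1}v_k^Tq_{k+j}+\Delta_j^{(k)},\quad j\ge2, \end{aligned} \] where $\|\Delta_0^{(k)}\|\le\mathcal{O}(\epsilon)\|A\|$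 and $\|\Delta_j^{(k)}\|\le(1+\rho_k)\|h_k\|+(1+\rho_k)\mathcal{O}(\epsilon)\|A\|$ for $j\ge1$.
   Context: All norms are 2-norms; $\epsilon$ is the unit roundoff. $\mathcal{O}(z)$, $z>0$, denotes an unspecified number whose size is bounded by $z$ times a constant that may depend on small powers of $n$ (problem size), $p$ (block width) and $k$ (iteration number). $e_k^T=[0_p,\ldots,0_p,I_p]\in\mathbb{R}^{p\times kp}$. Note that $\beta_{k+1}$ (from the continuation process) is in general different from $\beta_{k+1}^{FP}$ (from the finite precision algorithm). *)

From mathcomp Require Import all_boot all_order all_algebra.
From mathcomp Require Import boolp classical_sets reals.
Set Implicit Arguments. Unset Strict Implicit. Unset Printing Implicit Defensive.
Import Order.TTheory GRing.Theory Num.Theory.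
Local Open Scope ring_scope.
Local Open Scope classical_set_scope.

Definition vnorm (R : realType) (n : nat) (x : 'cV[R]_n) : R :=
  Num.sqrt (\sum_(i < n) x i ord0 ^+ 2).

Definition opnorm (R : realType) (m n : nat) (M : 'M[R]_(m, n)) : R :=
  sup [set vnorm (M *m x) | x in [set x : 'cV[R]_n | vnorm x <= 1]].

Definition blockV (R : realType) (n p k : nat) (v : nat -> 'M[R]_(n, p))
  : 'M[R]_(n, \sum_(j < k) p) := \mxrow_(j < k) v j.+1.

Definition blockT (R : realType) (p k : nat) (alpha beta : nat -> 'M[R]_p)
  : 'M[R]_(\sum_(j < k) p) :=
  \mxblock_(i < k, j < k)
    (if i == j then alpha i.+1
     else if (i : nat) == j.+1 then beta i.+1
     else if (j : nat) == i.+1 then (beta j.+1)^T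
     else 0).

Definition ekT (R : realType) (p k : nat) : 'M[R]_(p, \sum_(j < k) p) :=
  \mxrow_(j < k) (if (j : nat) == k.-1 then (1%:M : 'M[R]_p) else 0).

(* r_k with r_k^T = [v_k^T V_{k-1}, 0_p], i.e. r_k = [V_{k-1}^T v_k ; 0]. *)
Definition rvec (R : realType) (n p k : nat) (v : nat -> 'M[R]_(n, p))
  : 'M[R]_(\sum_(j < k) p, p) :=
  \mxcol_(j < k) (if (j < k.-1)%N then (v j.+1)^T *m v k else 0).

(* The Ritz basis is W_k = V_k S_m R_k^{-1}, and the block Lanczos relation gives
   A V_k S_m = V_k S_m Theta_m + (v_{k+1} beta_{k+1}^FP e_k^T + Delta V_k) S_m.
   Hence for every block Y with W_k^T Y = 0 the Ritz-value term disappears: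
   W_k^T A Y = R_k^{-T} S_m^T (e_k (v_{k+1} beta_{k+1}^FP)^T Y + Delta V_k^T Y).
   The continuation blocks q_{k+j} are orthogonal to W_k (and q_{k+j}, j >= 2, also
   to q_{k+1}) by construction, and the last Lanczos residual
   A v_k - v_k alpha_k - v_{k-1} beta_k^T equals v_{k+1} beta_{k+1}^FP + Delta v_k.
   Tested against q_{k+1} this residual gives beta_{k+1}^T, which combines with
   W_k^T v_k = R_k^{-T} S_m^T (r_k + e_k v_k^T v_k) into the O(eps) block
   e_k (I - v_k^T v_k) beta_{k+1}^T; tested against q_{k+j}, j >= 2, it only sees
   its W_k-component h_k.  Each Delta_j is thus W_k R_k^{-T} S_m^T applied to a block
   of norm at most ||h_k|| + O(eps)||A||, whence the factor rho_k = ||R_k^{-1}||. *)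

From mathcomp Require Import all_boot all_order all_algebra.
From mathcomp Require Import boolp classical_sets reals.
From mathcomp Require Import ring lra zify.
Set Implicit Arguments. Unset Strict Implicit. Unset Printing Implicit Defensive.
Import Order.TTheory GRing.Theory Num.Theory.
Local Open Scope ring_scope.

Section VectorNorm.
Variable R : realType.

Definition dotv n (x y : 'cV[R]_n) : R := \sum_(i < n) x i ord0 * y i ord0.

Lemma dotv0r n (x : 'cV[R]_n) : dotv x 0 = 0.
Proof. by rewrite /dotv big1 // => i _; rewrite mxE mulr0. Qed.

Lemma dotvC n (x y : 'cV[R]_n) : dotv x y = dotv y x.
Proof. by apply: eq_bigr => i _; rewrite mulrC. Qed.

Lemma dotv_trmx m n (M : 'M[R]_(m, n)) x y : dotv (M *m x) y = dotv x (M^T *m y).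
Proof.
have dotvE k (a b : 'cV[R]_k) : dotv a b = (a^T *m b) ord0 ord0.
  by rewrite mxE; apply: eq_bigr => i _; rewrite mxE.
by rewrite !dotvE trmx_mul mulmxA.
Qed.

Lemma dotv_ge0 n (x : 'cV[R]_n) : 0 <= dotv x x.
Proof. by apply: sumr_ge0 => i _; rewrite -expr2 sqr_ge0. Qed.

Lemma dotv_eq0 n (x : 'cV[R]_n) : dotv x x = 0 -> x = 0.
Proof.
move/eqP; rewrite psumr_eq0 => [/allP x0|i _]; last by rewrite -expr2 sqr_ge0.
apply/matrixP => i j; rewrite ord1 mxE.
by have := x0 i (mem_index_enum _); rewrite /= mulf_eq0 orbb => /eqP.
Qed.

Lemma dotv_comb n (a b : R) (x y : 'cV[R]_n) :
  dotv (a *: x + b *: y) (a *: x + b *: y)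
  = a ^+ 2 * dotv x x + 2 * a * b * dotv x y + b ^+ 2 * dotv y y.
Proof.
rewrite /dotv !mulr_sumr -!big_split; apply: eq_bigr => i _ /=.
by rewrite !mxE; ring.
Qed.

Lemma CauchySchwarz_dotv n (x y : 'cV[R]_n) : dotv x y ^+ 2 <= dotv x x * dotv y y.
Proof.
have [/dotv_eq0 ->|yy_neq0] := eqVneq (dotv y y) 0.
  by rewrite !dotv0r expr0n mulr0.
have yy_gt0 : 0 < dotv y y by rewrite lt_def yy_neq0 dotv_ge0.
have := dotv_ge0 (dotv y y *: x + (- dotv x y) *: y).
have -> : dotv (dotv y y *: x + (- dotv x y) *: y) (dotv y y *: x + (- dotv x y) *: y)
    = dotv y y * (dotv x x * dotv y y - dotv x y ^+ 2).
  by rewrite dotv_comb; ring.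
by rewrite pmulr_rge0 // subr_ge0.
Qed.

Lemma vnormE n (x : 'cV[R]_n) : vnorm x = Num.sqrt (dotv x x).
Proof. by congr Num.sqrt; apply: eq_bigr => i _; rewrite expr2. Qed.

Lemma vnorm_ge0 n (x : 'cV[R]_n) : 0 <= vnorm x.
Proof. by rewrite vnormE sqrtr_ge0. Qed.

Lemma vnorm_sqr n (x : 'cV[R]_n) : vnorm x ^+ 2 = dotv x x.
Proof. by rewrite vnormE sqr_sqrtr // dotv_ge0. Qed.

Lemma vnorm0 n : vnorm (0 : 'cV[R]_n) = 0.
Proof. by rewrite vnormE dotv0r sqrtr0. Qed.

Lemma vnorm_eq0 n (x : 'cV[R]_n) : vnorm x = 0 -> x = 0.
Proof. by move=> x0; apply: dotv_eq0; rewrite -vnorm_sqr x0 expr0n. Qed.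

Lemma dotv_le_vnorm n (x y : 'cV[R]_n) : dotv x y <= vnorm x * vnorm y.
Proof.
rewrite !vnormE -sqrtrM ?dotv_ge0 //; apply: le_trans (ler_norm _) _.
by rewrite -sqrtr_sqr ler_sqrt ?CauchySchwarz_dotv // mulr_ge0 ?dotv_ge0.
Qed.

Lemma ler_vnormD n (x y : 'cV[R]_n) : vnorm (x + y) <= vnorm x + vnorm y.
Proof.
rewrite -ler_sqr ?nnegrE ?addr_ge0 ?vnorm_ge0 // vnorm_sqr.
rewrite -[x]scale1r -[y]scale1r dotv_comb !scale1r -!vnorm_sqr.
by have := dotv_le_vnorm x y; lra.
Qed.

Lemma vnormZ n (a : R) (x : 'cV[R]_n) : vnorm (a *: x) = `|a| * vnorm x.
Proof.
rewrite !vnormE -sqrtr_sqr -sqrtrM ?sqr_ge0 //; congr Num.sqrt.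
by rewrite /dotv mulr_sumr; apply: eq_bigr => i _; rewrite !mxE; ring.
Qed.

Lemma vnormN n (x : 'cV[R]_n) : vnorm (- x) = vnorm x.
Proof. by rewrite -scaleN1r vnormZ normrN normr1 mul1r. Qed.

End VectorNorm.

Section OperatorNorm.
Variable R : realType.

Lemma opnorm_has_sup m n (M : 'M[R]_(m, n)) :
  has_sup [set vnorm (M *m x) | x in [set x : 'cV[R]_n | vnorm x <= 1]]%classic.
Proof.
split; first by exists (vnorm (M *m 0)), 0 => //=; rewrite vnorm0 ler01.
exists (Num.sqrt (\sum_i \sum_j M i j ^+ 2)) => _ [x /= x_le1 <-].
rewrite -[vnorm _]ger0_norm ?vnorm_ge0 // -sqrtr_sqr ler_sqrt; last first.
  by rewrite !sumr_ge0 // => i _; rewrite sumr_ge0 // => j _; rewrite sqr_ge0.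
rewrite vnorm_sqr /dotv; apply: ler_sum => i _; rewrite -expr2.
have -> : (M *m x) i ord0 = dotv (row i M)^T x.
  by rewrite mxE; apply: eq_bigr => j _; rewrite !mxE.
apply: le_trans (CauchySchwarz_dotv _ _) _.
have xx_le1 : dotv x x <= 1 by rewrite -vnorm_sqr expr_le1 ?vnorm_ge0.
have -> : \sum_j M i j ^+ 2 = dotv (row i M)^T (row i M)^T.
  by apply: eq_bigr => j _; rewrite !mxE expr2.
by rewrite ler_piMr ?dotv_ge0.
Qed.

Lemma opnorm_ub m n (M : 'M[R]_(m, n)) x : vnorm x <= 1 -> vnorm (M *m x) <= opnorm M.
Proof. by move=> x_le1; apply: (sup_upper_bound (opnorm_has_sup M)); exists x. Qed.

Lemma opnorm_lub m n (M : 'M[R]_(m, n)) b :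
  (forall x, vnorm x <= 1 -> vnorm (M *m x) <= b) -> opnorm M <= b.
Proof.
move=> Mb; apply: ge_sup; first by exists (vnorm (M *m 0)), 0 => //=; rewrite vnorm0 ler01.
by move=> _ [x /= x_le1 <-]; apply: Mb.
Qed.

Lemma opnorm_ge0 m n (M : 'M[R]_(m, n)) : 0 <= opnorm M.
Proof. by apply: le_trans (opnorm_ub M (x := 0) _); rewrite ?mulmx0 vnorm0 ?ler01. Qed.

Lemma opnorm0 m n : opnorm (0 : 'M[R]_(m, n)) = 0.
Proof.
apply/eqP; rewrite eq_le opnorm_ge0 andbT.
by apply: opnorm_lub => x _; rewrite mul0mx vnorm0.
Qed.

Lemma vnorm_mulmx_le m n (M : 'M[R]_(m, n)) x : vnorm (M *m x) <= opnorm M * vnorm x.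
Proof.
have [/vnorm_eq0 ->|x_neq0] := eqVneq (vnorm x) 0; first by rewrite mulmx0 !vnorm0 mulr0.
have x_gt0 : 0 < vnorm x by rewrite lt_def x_neq0 vnorm_ge0.
have := opnorm_ub M (x := (vnorm x)^-1 *: x).
rewrite -scalemxAr !vnormZ ger0_norm ?invr_ge0 ?vnorm_ge0 // mulVf // lexx.
by rewrite ler_pdivrMl // mulrC => /(_ isT).
Qed.

Lemma ler_opnormM m n l (M : 'M[R]_(m, n)) (N : 'M[R]_(n, l)) :
  opnorm (M *m N) <= opnorm M * opnorm N.
Proof.
apply: opnorm_lub => x x_le1; rewrite -mulmxA.
apply: le_trans (vnorm_mulmx_le _ _) _; rewrite ler_wpM2l ?opnorm_ge0 //.
apply: le_trans (vnorm_mulmx_le _ _) _.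
by rewrite -[leRHS]mulr1 ler_wpM2l ?opnorm_ge0.
Qed.

Lemma opnormM_le1l m n l (M : 'M[R]_(m, n)) (N : 'M[R]_(n, l)) :
  opnorm M <= 1 -> opnorm (M *m N) <= opnorm N.
Proof.
move=> M_le1; apply: le_trans (ler_opnormM _ _) _.
by rewrite -[leRHS]mul1r ler_wpM2r ?opnorm_ge0.
Qed.

Lemma opnormM_le1r m n l (M : 'M[R]_(m, n)) (N : 'M[R]_(n, l)) :
  opnorm N <= 1 -> opnorm (M *m N) <= opnorm M.
Proof.
move=> N_le1; apply: le_trans (ler_opnormM _ _) _.
by rewrite -[leRHS]mulr1 ler_wpM2l ?opnorm_ge0.
Qed.

Lemma ler_opnormD m n (M N : 'M[R]_(m, n)) : opnorm (M + N) <= opnorm M + opnorm N.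
Proof.
apply: opnorm_lub => x x_le1; rewrite mulmxDl.
by apply: le_trans (ler_vnormD _ _) _; rewrite lerD ?opnorm_ub.
Qed.

Lemma opnormN m n (M : 'M[R]_(m, n)) : opnorm (- M) = opnorm M.
Proof.
have le_opp (N : 'M[R]_(m, n)) : opnorm (- N) <= opnorm N.
  by apply: opnorm_lub => x x_le1; rewrite mulNmx vnormN opnorm_ub.
by apply/eqP; rewrite eq_le le_opp -{1}(opprK M) le_opp.
Qed.

Lemma ler_opnormB m n (M N : 'M[R]_(m, n)) : opnorm (M - N) <= opnorm M + opnorm N.
Proof. by rewrite -(opnormN N) ler_opnormD. Qed.

Lemma ler_opnorm_sum m n (I : finType) (F : I -> 'M[R]_(m, n)) :
  opnorm (\sum_i F i) <= \sum_i opnorm (F i).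
Proof.
elim/big_ind2: _ => [|M1 a1 M2 a2 le1 le2|//]; first by rewrite opnorm0.
exact: le_trans (ler_opnormD _ _) (lerD le1 le2).
Qed.

Lemma opnorm_tr m n (M : 'M[R]_(m, n)) : opnorm M^T = opnorm M.
Proof.
have le_tr m' n' (N : 'M[R]_(m', n')) : opnorm N^T <= opnorm N.
  apply: opnorm_lub => x x_le1.
  have [->|Nx_neq0] := eqVneq (vnorm (N^T *m x)) 0; first exact: opnorm_ge0.
  have Nx_gt0 : 0 < vnorm (N^T *m x) by rewrite lt_def Nx_neq0 vnorm_ge0.
  rewrite -(ler_pM2r Nx_gt0) -expr2 vnorm_sqr -dotv_trmx dotvC.
  apply: le_trans (dotv_le_vnorm _ _) _; apply: le_trans (ler_wpM2r (vnorm_ge0 _) x_le1) _.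
  by rewrite mul1r vnorm_mulmx_le.
by apply/eqP; rewrite eq_le le_tr -{1}(trmxK M) le_tr.
Qed.

Lemma opnorm_isometry m n (W : 'M[R]_(m, n)) : W^T *m W = 1%:M -> opnorm W <= 1.
Proof.
move=> WW; apply: opnorm_lub => x.
by rewrite !vnormE dotv_trmx mulmxA WW mul1mx.
Qed.

Lemma opnorm_sqr_le m n (M : 'M[R]_(m, n)) : opnorm M ^+ 2 <= opnorm (M^T *m M).
Proof.
rewrite -[leRHS]sqr_sqrtr ?opnorm_ge0 // ler_sqr ?nnegrE ?sqrtr_ge0 ?opnorm_ge0 //.
apply: opnorm_lub => x x_le1.
rewrite -[vnorm _]ger0_norm ?vnorm_ge0 // -sqrtr_sqr ler_sqrt ?opnorm_ge0 //.
rewrite vnorm_sqr dotv_trmx mulmxA; apply: le_trans (dotv_le_vnorm _ _) _.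
apply: le_trans (ler_wpM2r (vnorm_ge0 _) x_le1) _.
by rewrite mul1r opnorm_ub.
Qed.

Lemma opnorm_le_near_isometry m n (M : 'M[R]_(m, n)) d :
  0 <= d -> opnorm (M^T *m M - 1%:M) <= d -> opnorm M <= 1 + d.
Proof.
move=> d_ge0 MM_le; have M_ge0 := opnorm_ge0 M.
have : opnorm M ^+ 2 <= d + 1.
  apply: le_trans (opnorm_sqr_le M) _; rewrite -[M^T *m M](subrK 1%:M).
  apply: le_trans (ler_opnormD _ _) (lerD MM_le _).
  by apply: opnorm_isometry; rewrite trmx1 mul1mx.
by nra.
Qed.

End OperatorNorm.

Section BlockMatrices.
Variable R : realType.

Definition block_unit p k (j : 'I_k) : 'M[R]_(p, \sum_(l < k) p) :=
  \mxrow_(l < k) (if l == j then 1%:M else 0).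

Lemma tr_block_unit p k (j : 'I_k) :
  (block_unit p j)^T = \mxcol_(l < k) (if l == j then 1%:M else 0 : 'M[R]_p).
Proof. by rewrite tr_mxrow; apply: eq_mxcol => l; case: eqP; rewrite ?trmx1 ?trmx0. Qed.

Lemma mxrow_mul_block_unitT n p k (D : 'I_k -> 'M[R]_(n, p)) (j : 'I_k) :
  \mxrow_(l < k) D l *m (block_unit p j)^T = D j.
Proof.
rewrite tr_block_unit mul_mxrow_mxcol (bigD1 j) //= eqxx mulmx1 big1 ?addr0 //.
by move=> i /negbTE ->; rewrite mulmx0.
Qed.

Lemma opnorm_block_unit p k (j : 'I_k) : opnorm (block_unit p j) <= 1.
Proof.
by rewrite -opnorm_tr opnorm_isometry // trmxK mxrow_mul_block_unitT eqxx.
Qed.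

Lemma mxrow_sum_block_unit n p k (D : 'I_k -> 'M[R]_(n, p)) :
  \mxrow_(l < k) D l = \sum_(j < k) D j *m block_unit p j.
Proof.
transitivity (\sum_(j < k) \mxrow_(l < k)
    (D j *m (if l == j then 1%:M else 0 : 'M[R]_p))); last first.
  by apply: eq_bigr => j _; rewrite mul_mxrow.
rewrite -mxrow_sum; apply: eq_mxrow => l.
rewrite (bigD1 l) //= eqxx mulmx1 big1 ?addr0 // => i.
by rewrite eq_sym => /negbTE ->; rewrite mulmx0.
Qed.

Lemma ler_opnorm_mxrow n p k (D : 'I_k -> 'M[R]_(n, p)) :
  opnorm (\mxrow_(l < k) D l) <= \sum_(j < k) opnorm (D j).
Proof.
rewrite mxrow_sum_block_unit; apply: le_trans (ler_opnorm_sum _) _.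
by apply: ler_sum => j _; apply: opnormM_le1r; apply: opnorm_block_unit.
Qed.

Lemma ekT_block_unit p k : ekT R p k.+1 = block_unit p ord_max.
Proof. by apply: eq_mxrow. Qed.

Lemma blockV_blockT_ekT n p k (v : nat -> 'M[R]_(n, p)) (alpha beta : nat -> 'M[R]_p) :
  v 0%N = 0 ->
  blockV k.+1 v *m blockT k.+1 alpha beta *m (ekT R p k.+1)^T
  = v k.+1 *m alpha k.+1 + v k *m (beta k.+1)^T.
Proof.
move=> v0; rewrite ekT_block_unit -mulmxA tr_block_unit /blockT mul_mxblock_mxrow.
under eq_mxcol => i.
  rewrite (bigD1 ord_max) //= eqxx mulmx1 big1 ?addr0; last first.
    by move=> j /negbTE ->; rewrite mulmx0.
  over.
rewrite /blockV mul_mxrow_mxcol big_ord_recr /= eqxx addrC; congr (_ + _).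
case: k v0 => [|k] v0; first by rewrite big_ord0 v0 mul0mx.
rewrite big_ord_recr /= big1 ?add0r => [|i _].
  by rewrite -val_eqE /= eqxx /= !ifN //; lia.
have := ltn_ord i; rewrite -val_eqE /= eqSS => i_lt.
by rewrite !ifN ?mulmx0 //; lia.
Qed.

Lemma trmx_blockV_mul_last n p k (v : nat -> 'M[R]_(n, p)) :
  (blockV k.+1 v)^T *m v k.+1
  = rvec k.+1 v + (ekT R p k.+1)^T *m ((v k.+1)^T *m v k.+1).
Proof.
rewrite ekT_block_unit tr_block_unit /blockV tr_mxrow !mxcol_mul /rvec -mxcolD.
apply: eq_mxcol => j /=; have j_lt := ltn_ord j.
case: ltnP => j_k.
  by rewrite ifN ?mul0mx ?addr0 // -val_eqE /= neq_ltn j_k.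
have -> : j = ord_max by apply/val_inj/eqP; rewrite /= eqn_leq j_k -ltnS j_lt.
by rewrite eqxx mul1mx add0r.
Qed.

Lemma colsub_orthonormal m n (S : 'M[R]_n) (f : 'I_m -> 'I_n) :
  S^T *m S = 1%:M -> injective f -> (colsub f S)^T *m colsub f S = 1%:M.
Proof.
move=> SS injf; apply/matrixP => i j.
have := congr1 (fun M : 'M[R]_n => M (f i) (f j)) SS => /=.
by rewrite !mxE (inj_eq injf) => <-; apply: eq_bigr => l _; rewrite !mxE.
Qed.

Lemma mulmx_colsub_eigen m n (S T Theta : 'M[R]_n) (f : 'I_m -> 'I_n) :
  S^T *m S = 1%:M -> is_diag_mx Theta -> T = S *m Theta *m S^T ->
  T *m colsub f S = colsub f S *m diag_mx (\row_l Theta (f l) (f l)).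
Proof.
move=> SS /is_diag_mxP Theta_diag ->.
rewrite -!mulmxA mulmx_colsub SS mulmx_colsub mulmx1 mulmx_colsub mul_mx_diag.
apply/matrixP => i j; rewrite !mxE (bigD1 (f j)) //= big1 ?addr0 // => l fl.
by rewrite Theta_diag ?mulr0.
Qed.

End BlockMatrices.

Lemma trmx_mul_eq0_submx (F : fieldType) n a b c (N : 'M[F]_(n, a))
    (U : 'M[F]_(n, b)) (X : 'M[F]_(n, c)) :
  (U^T <= X^T)%MS -> N^T *m X = 0 -> N^T *m U = 0.
Proof.
move=> /submxP[D UD] NX.
by rewrite -[U]trmxK UD trmx_mul trmxK mulmxA NX mul0mx.
Qed.

Lemma ler_pM_1addr (R : realDomainType) (r x a b : R) :
  0 <= r -> 0 <= a -> 0 <= b -> x <= a + b -> r * x <= (1 + r) * a + (1 + r) * b.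
Proof. by move=> *; nra. Qed.

(* The paper's index [k] is [k.+1] here, so that [v_{k-1}] is simply [v k]. *)
Section Continuation.
Variables (R : realType) (n p k m : nat).
Variables (A : 'M[R]_n) (v : nat -> 'M[R]_(n, p)) (alpha beta : nat -> 'M[R]_p).
Variables (betaFP : 'M[R]_p) (dv : nat -> 'M[R]_(n, p)).
Hypotheses (symA : A^T = A) (v0 : v 0%N = 0).
Hypothesis lanczos : A *m blockV k.+1 v
  = blockV k.+1 v *m blockT k.+1 alpha beta + v k.+2 *m betaFP *m ekT R p k.+1
    + \mxrow_(j < k.+1) dv j.+1.

Local Notation res := (A *m v k.+1 - v k.+1 *m alpha k.+1 - v k *m (beta k.+1)^T).
Local Notation eT := (ekT R p k.+1)^T.
Local Notation dV := (\mxrow_(j < k.+1) dv j.+1).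

Lemma lanczos_residual : res = v k.+2 *m betaFP + dv k.+1.
Proof.
have := congr1 (mulmx^~ eT) lanczos; rewrite /= !mulmxDl blockV_blockT_ekT //.
rewrite -!mulmxA !ekT_block_unit !mxrow_mul_block_unitT eqxx mulmx1 => ->.
by rewrite -addrA -opprD -[_ + _ + dv _]addrA addrC addKr.
Qed.

Variables (S Theta : 'M[R]_(\sum_(j < k.+1) p)) (f : 'I_m -> 'I_(\sum_(j < k.+1) p)).
Variables (W : 'M[R]_(n, m)) (Rk : 'M[R]_m).
Hypotheses (orthoS : S^T *m S = 1%:M) (diagTheta : is_diag_mx Theta).
Hypotheses (eigT : blockT k.+1 alpha beta = S *m Theta *m S^T) (injf : injective f).

Local Notation Sm := (colsub f S).
Local Notation Zm := (blockV k.+1 v *m Sm).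
Local Notation G := (invmx Rk)^T.
Local Notation P1 := (W *m W^T).
Local Notation hk := (P1 *m res).

Hypotheses (rankZ : \rank Zm = m) (orthoW : W^T *m W = 1%:M) (qrZ : Zm = W *m Rk).

Lemma unitmx_Rk : Rk \in unitmx.
Proof.
rewrite -row_free_unit /row_free eqn_leq rank_leq_row /=.
by rewrite -[X in (X <= _)%N]rankZ qrZ mxrankM_maxr.
Qed.

Lemma trW_ritz : W^T = G *m Sm^T *m (blockV k.+1 v)^T.
Proof.
have -> : W = Zm *m invmx Rk by rewrite qrZ mulmxK ?unitmx_Rk.
by rewrite !trmx_mul mulmxA.
Qed.

(* [A Z_m = W R_k Theta_m + ...], and [W^T Y = 0] kills the Ritz-value term. *)
Lemma trW_mulA r (Y : 'M[R]_(n, r)) : W^T *m Y = 0 ->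
  W^T *m A *m Y = G *m (Sm^T *m (eT *m ((v k.+2 *m betaFP)^T *m Y) + dV^T *m Y)).
Proof.
move=> WY; set D := diag_mx (\row_l Theta (f l) (f l)).
have AZ : A *m Zm = W *m (Rk *m D) + v k.+2 *m betaFP *m ekT R p k.+1 *m Sm + dV *m Sm.
  rewrite mulmxA lanczos !mulmxDl -(mulmxA (blockV _ _)).
  by rewrite (mulmx_colsub_eigen f orthoS diagTheta eigT) mulmxA qrZ mulmxA.
have -> : W^T *m A = G *m (A *m Zm)^T.
  by rewrite trW_ritz !trmx_mul symA !mulmxA.
rewrite AZ !linearD /= !trmx_mul !mulmxDl -!mulmxA WY !mulmx0 add0r.
by rewrite -!mulmxDr !mulmxA.
Qed.

Lemma trW_mul_last :
  W^T *m v k.+1 = G *m (Sm^T *m (rvec k.+1 v + eT *m ((v k.+1)^T *m v k.+1))).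
Proof. by rewrite trW_ritz -!mulmxA trmx_blockV_mul_last. Qed.

Lemma hk_defectE : hk - P1 *m v k.+2 *m betaFP = W *m (W^T *m dv k.+1).
Proof. by rewrite lanczos_residual mulmxDr !mulmxA addrAC subrr add0r. Qed.

Variables (rw : nat -> nat) (Q : forall j : nat, 'M[R]_(n, rw j)).
Variables (B1 : 'M[R]_(rw 0%N, p)) (B : forall j : nat, 'M[R]_(rw j.+1, rw j)).

Local Notation P2 := (P1 + Q 0%N *m (Q 0%N)^T).

Hypothesis orthoQ : forall j, (Q j)^T *m Q j = 1%:M.
Hypothesis Q0_B1 : Q 0%N *m B1 = (1%:M - P1) *m res.
Hypothesis Q0_sub : ((Q 0%N)^T <= ((1%:M - P1) *m res)^T)%MS.
Hypothesis Q1_sub :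
  ((Q 1%N)^T <= ((1%:M - P2) *m (A *m Q 0%N - v k.+1 *m B1^T))^T)%MS.
Hypothesis Q_sub : forall j, ((Q j.+2)^T <=
  ((1%:M - (P2 + Q j.+1 *m (Q j.+1)^T)) *m (A *m Q j.+1 - Q j *m (B j)^T))^T)%MS.

Lemma trW_I_P1 : W^T *m (1%:M - P1) = 0.
Proof. by rewrite mulmxBr mulmx1 mulmxA orthoW mul1mx subrr. Qed.

Lemma trW_Q0 : W^T *m Q 0%N = 0.
Proof. by apply: trmx_mul_eq0_submx Q0_sub _; rewrite mulmxA trW_I_P1 mul0mx. Qed.

Lemma trQ0_W : (Q 0%N)^T *m W = 0.
Proof. by rewrite -[W]trmxK -trmx_mul trW_Q0 trmx0. Qed.

Lemma continuation_orth j : W^T *m Q j.+1 = 0 /\ (Q 0%N)^T *m Q j.+1 = 0.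
Proof.
have I_sub (a r : nat) (N : 'M[R]_(n, a)) (P : 'M[R]_n) (Y : 'M[R]_(n, r)) :
    N^T *m (1%:M - (P + Y *m Y^T)) = N^T *m (1%:M - P) - N^T *m Y *m Y^T.
  by rewrite opprD addrA mulmxBr mulmxA.
have trW_P2 : W^T *m (1%:M - P2) = 0 by rewrite I_sub trW_I_P1 trW_Q0 mul0mx subr0.
have trQ0_P2 : (Q 0%N)^T *m (1%:M - P2) = 0.
  by rewrite I_sub orthoQ mul1mx mulmxBr mulmx1 mulmxA trQ0_W mul0mx subr0 subrr.
elim: j => [|j [IHW IHQ0]].
  by split; apply: trmx_mul_eq0_submx Q1_sub _; rewrite mulmxA ?trW_P2 ?trQ0_P2 mul0mx.
by split; apply: trmx_mul_eq0_submx (Q_sub j) _;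
  rewrite mulmxA I_sub ?IHW ?IHQ0 mul0mx subr0 ?trW_P2 ?trQ0_P2 mul0mx.
Qed.

Lemma B1E : B1 = (Q 0%N)^T *m res.
Proof.
rewrite -[B1]mul1mx -(orthoQ 0%N) -mulmxA Q0_B1 mulmxA [_ *m (1%:M - _)]mulmxBr mulmx1.
by rewrite mulmxA trQ0_W mul0mx subr0.
Qed.

Lemma residual_trQ0 : (v k.+2 *m betaFP)^T *m Q 0%N = B1^T - (dv k.+1)^T *m Q 0%N.
Proof.
have -> : v k.+2 *m betaFP = res - dv k.+1 by rewrite lanczos_residual addrK.
by rewrite B1E linearB /= mulmxBl trmx_mul trmxK.
Qed.

Lemma residual_trQ j : (v k.+2 *m betaFP)^T *m Q j.+1
  = hk^T *m Q j.+1 - (dv k.+1)^T *m Q j.+1.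
Proof.
have -> : v k.+2 *m betaFP = (1%:M - P1) *m res + (hk - dv k.+1).
  by rewrite addrA mulmxBl mul1mx subrK lanczos_residual addrK.
rewrite -Q0_B1 [X in X *m _]linearD /= mulmxDl trmx_mul -(mulmxA B1^T).
by rewrite (continuation_orth j).2 mulmx0 add0r [X in X *m _]linearB /= mulmxBl.
Qed.

Lemma hk1_defectE :
  P1 *m (A *m Q 0%N - v k.+1 *m B1^T) - - (W *m G *m Sm^T *m rvec k.+1 v *m B1^T)
  = W *m (G *m (Sm^T *m (eT *m ((1%:M - (v k.+1)^T *m v k.+1) *m B1^T
                                 - (dv k.+1)^T *m Q 0%N) + dV^T *m Q 0%N))).
Proof.
rewrite -!mulmxA mulmxBr !(mulmxA W^T) (trW_mulA trW_Q0) trW_mul_last residual_trQ0.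
rewrite opprK -!mulmxA -!mulmxBr -!mulmxDr; congr (W *m (G *m (Sm^T *m _))).
rewrite mulmxBl mul1mx !mulmxBr mulmxDl opprD addrA addrAC addrNK addrAC.
by rewrite (addrAC (eT *m B1^T)) !mulmxA.
Qed.

Lemma h_defectE j :
  P1 *m A *m Q j.+1 + Q 0%N *m B1 *m (v k.+1)^T *m Q j.+1
    - Q 0%N *m B1 *m (v k.+1)^T *m Q j.+1
  = W *m (G *m (Sm^T *m (eT *m (hk^T *m Q j.+1 - (dv k.+1)^T *m Q j.+1)
                          + dV^T *m Q j.+1))).
Proof.
have -> : P1 *m A *m Q j.+1 = W *m (W^T *m A *m Q j.+1) by rewrite !mulmxA.
by rewrite addrK (trW_mulA (continuation_orth j).1) residual_trQ.
Qed.

Local Notation rho := (opnorm (invmx Rk)).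

Lemma opnorm_W_le1 : opnorm W <= 1.
Proof. exact: opnorm_isometry orthoW. Qed.

Lemma opnorm_ritz_le r (X : 'M[R]_(\sum_(j < k.+1) p, r)) :
  opnorm (W *m (G *m (Sm^T *m X))) <= rho * opnorm X.
Proof.
apply: le_trans (opnormM_le1l _ opnorm_W_le1) _.
apply: le_trans (ler_opnormM _ _) _; rewrite opnorm_tr ler_wpM2l ?opnorm_ge0 //.
apply: opnormM_le1l; rewrite opnorm_tr.
exact: opnorm_isometry (colsub_orthonormal orthoS injf).
Qed.

Lemma opnorm_last_errors_le r (X : 'M[R]_(p, r)) (Y : 'M[R]_(n, r)) :
  opnorm Y <= 1 ->
  opnorm (eT *m X + dV^T *m Y) <= opnorm X + \sum_(j < k.+1) opnorm (dv j.+1).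
Proof.
move=> Y_le1; apply: le_trans (ler_opnormD _ _) _; apply: lerD.
  by apply: opnormM_le1l; rewrite opnorm_tr ekT_block_unit opnorm_block_unit.
by apply: le_trans (opnormM_le1r _ Y_le1) _; rewrite opnorm_tr ler_opnorm_mxrow.
Qed.

Lemma opnorm_Q_le1 j : opnorm (Q j) <= 1.
Proof. exact: opnorm_isometry (orthoQ j). Qed.

Lemma hk_defect_le : opnorm (hk - P1 *m v k.+2 *m betaFP) <= opnorm (dv k.+1).
Proof.
rewrite hk_defectE; apply: le_trans (opnormM_le1l _ opnorm_W_le1) _.
by apply: opnormM_le1l; rewrite opnorm_tr opnorm_W_le1.
Qed.

Lemma opnorm_B1_le : opnorm B1 <= opnorm (v k.+2) * opnorm betaFP + opnorm (dv k.+1).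
Proof.
rewrite B1E lanczos_residual.
apply: le_trans (opnormM_le1l _ _) _; first by rewrite opnorm_tr opnorm_Q_le1.
by apply: le_trans (ler_opnormD _ _) _; rewrite lerD2r ler_opnormM.
Qed.

Lemma hk1_defect_le :
  opnorm (P1 *m (A *m Q 0%N - v k.+1 *m B1^T)
          - - (W *m G *m Sm^T *m rvec k.+1 v *m B1^T))
  <= rho * (opnorm (1%:M - (v k.+1)^T *m v k.+1) * opnorm B1
            + opnorm (dv k.+1) + \sum_(j < k.+1) opnorm (dv j.+1)).
Proof.
rewrite hk1_defectE; apply: le_trans (opnorm_ritz_le _) _.
rewrite ler_wpM2l ?opnorm_ge0 //.
apply: le_trans (opnorm_last_errors_le _ (opnorm_Q_le1 _)) _; rewrite lerD2r.
apply: le_trans (ler_opnormB _ _) _; apply: lerD.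
  by rewrite -(opnorm_tr B1) ler_opnormM.
by apply: le_trans (opnormM_le1r _ (opnorm_Q_le1 _)) _; rewrite opnorm_tr.
Qed.

Lemma h_defect_le j :
  opnorm (P1 *m A *m Q j.+1 + Q 0%N *m B1 *m (v k.+1)^T *m Q j.+1
          - Q 0%N *m B1 *m (v k.+1)^T *m Q j.+1)
  <= rho * (opnorm hk + opnorm (dv k.+1) + \sum_(j < k.+1) opnorm (dv j.+1)).
Proof.
rewrite h_defectE; apply: le_trans (opnorm_ritz_le _) _.
rewrite ler_wpM2l ?opnorm_ge0 //.
apply: le_trans (opnorm_last_errors_le _ (opnorm_Q_le1 _)) _; rewrite lerD2r.
apply: le_trans (ler_opnormB _ _) _.
by apply: lerD; apply: le_trans (opnormM_le1r _ (opnorm_Q_le1 _)) _; rewrite opnorm_tr.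
Qed.

Variables (c eps : R).
Hypotheses (c_ge0 : 0 <= c) (eps_gt0 : 0 < eps) (eps_le1 : eps <= 1).
Hypothesis dv_le : forall j, (0 < j <= k.+1)%N -> opnorm (dv j) <= c * eps * opnorm A.
Hypothesis vv_le :
  forall j, (j <= k.+1)%N -> opnorm ((v j.+1)^T *m v j.+1 - 1%:M) <= c * eps.
Hypothesis betaFP_le : opnorm betaFP <= c * opnorm A.

Local Notation E := (c * eps * opnorm A).
Local Notation C := (c * (k.+2%:R + c * (2 + c))).

Lemma err_sum_le : opnorm (dv k.+1) + \sum_(j < k.+1) opnorm (dv j.+1) <= k.+2%:R * E.
Proof.
have -> : k.+2%:R * E = E + \sum_(j < k.+1) E.
  by rewrite sumr_const card_ord -mulrS mulr_natl.
apply: lerD; first by apply: dv_le; rewrite leqnn.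
by apply: ler_sum => j _; apply: dv_le; exact: ltn_ord.
Qed.

Lemma opnorm_B1_le_normA : opnorm B1 <= c * (2 + c) * opnorm A.
Proof.
have ceps_le : c * eps <= c by rewrite ler_piMr.
have v_le : opnorm (v k.+2) <= 1 + c.
  exact: opnorm_le_near_isometry c_ge0 (le_trans (vv_le (leqnn _)) ceps_le).
have E_le : E <= c * opnorm A by rewrite ler_wpM2r ?opnorm_ge0.
have dvk_le : opnorm (dv k.+1) <= E by apply: dv_le; rewrite leqnn.
apply: le_trans opnorm_B1_le _.
by have := ler_pM (opnorm_ge0 _) (opnorm_ge0 _) v_le betaFP_le; lra.
Qed.

Lemma constE : C * eps * opnorm A = k.+2%:R * E + c * eps * (c * (2 + c) * opnorm A).
Proof. by ring. Qed.

Lemma err_le_const : k.+2%:R * E <= C * eps * opnorm A.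
Proof. by rewrite constE lerDl !mulr_ge0 ?addr_ge0 ?opnorm_ge0 ?(ltW eps_gt0). Qed.

Lemma const_ge0 : 0 <= C * eps * opnorm A.
Proof.
apply: le_trans err_le_const.
by rewrite !mulr_ge0 ?opnorm_ge0 ?(ltW eps_gt0).
Qed.

Lemma hk_defect_bound : opnorm (hk - P1 *m v k.+2 *m betaFP) <= C * eps * opnorm A.
Proof.
apply: le_trans hk_defect_le (le_trans _ err_le_const).
apply: le_trans err_sum_le; rewrite lerDl.
by apply: sumr_ge0 => j _; apply: opnorm_ge0.
Qed.

Lemma hk1_defect_bound :
  opnorm (P1 *m (A *m Q 0%N - v k.+1 *m B1^T)
          - - (W *m G *m Sm^T *m rvec k.+1 v *m B1^T))
  <= (1 + rho) * opnorm hk + (1 + rho) * (C * eps * opnorm A).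
Proof.
apply: le_trans hk1_defect_le (ler_pM_1addr (opnorm_ge0 _) (opnorm_ge0 _) const_ge0 _).
have vvk_le : opnorm (1%:M - (v k.+1)^T *m v k.+1) <= c * eps.
  by rewrite -opprB opnormN vv_le.
have := ler_pM (opnorm_ge0 _) (opnorm_ge0 _) vvk_le opnorm_B1_le_normA.
by have := err_sum_le; have := opnorm_ge0 hk; rewrite constE; lra.
Qed.

Lemma h_defect_bound j :
  opnorm (P1 *m A *m Q j.+1 + Q 0%N *m B1 *m (v k.+1)^T *m Q j.+1
          - Q 0%N *m B1 *m (v k.+1)^T *m Q j.+1)
  <= (1 + rho) * opnorm hk + (1 + rho) * (C * eps * opnorm A).
Proof.
apply: le_trans (h_defect_le j) (ler_pM_1addr (opnorm_ge0 _) (opnorm_ge0 _) const_ge0 _).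
by have := err_sum_le; have := err_le_const; lra.
Qed.

End Continuation.

Theorem theorem5 (R : realType) (n p k : nat) (c : R) :
  (1 <= k)%N -> 0 <= c ->
  exists (C eps0 : R), 0 <= C /\ 0 < eps0 /\
  forall (eps : R) (m : nat) (A : 'M[R]_n) (v : nat -> 'M[R]_(n, p))
    (alpha beta : nat -> 'M[R]_p) (betaFP : 'M[R]_p) (dv : nat -> 'M[R]_(n, p))
    (S Theta : 'M[R]_(\sum_(j < k) p)) (f : 'I_m -> 'I_(\sum_(j < k) p))
    (W : 'M[R]_(n, m)) (Rk : 'M[R]_m)
    (rw : nat -> nat) (Q : forall j : nat, 'M[R]_(n, rw j))
    (B1 : 'M[R]_(rw 0%N, p)) (B : forall j : nat, 'M[R]_(rw j.+1, rw j)),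
  0 < eps <= eps0 ->
  (* the finite precision block Lanczos quantities *)
  A^T = A ->
  v 0%N = 0 ->
  A *m blockV k v
    = blockV k v *m blockT k alpha beta + v k.+1 *m betaFP *m ekT R p k
      + \mxrow_(j < k) dv j.+1 ->
  (forall j, (1 <= j <= k)%N -> opnorm (dv j) <= c * eps * opnorm A) ->
  (forall j, (j <= k)%N -> opnorm ((v j.+1)^T *m v j.+1 - 1%:M) <= c * eps) ->
  (forall j, (j < k)%N ->
     opnorm ((v j)^T *m v j.+1 *m beta j.+1) <= c * eps * opnorm A) ->
  opnorm ((v k)^T *m v k.+1 *m betaFP) <= c * eps * opnorm A ->
  opnorm betaFP <= c * opnorm A ->
  (* spectral decomposition T_k = S_k Theta_k S_k^T *)
  S^T *m S = 1%:M -> is_diag_mx Theta ->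
  blockT k alpha beta = S *m Theta *m S^T ->
  (* selected linearly independent Ritz vectors and their QR factorization *)
  injective f ->
  let Sm := colsub f S in
  let Zm := blockV k v *m Sm in
  \rank Zm = m ->
  W^T *m W = 1%:M -> is_trig_mx Rk^T -> Zm = W *m Rk ->
  (* the continuation process *)
  let P1 := W *m W^T in
  let P2 := P1 + Q 0%N *m (Q 0%N)^T in
  (forall j, (Q j)^T *m Q j = 1%:M) ->
  let X1 := (1%:M - P1) *m (A *m v k - v k *m alpha k - v k.-1 *m (beta k)^T) in
  Q 0%N *m B1 = X1 -> ((Q 0%N)^T == X1^T)%MS -> row_free B1 ->
  let X2 := (1%:M - P2) *m (A *m Q 0%N - v k *m B1^T) in
  Q 1%N *m B 0%N = X2 -> ((Q 1%N)^T == X2^T)%MS -> row_free (B 0%N) ->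
  (forall j,
     let Xj := (1%:M - (P2 + Q j.+1 *m (Q j.+1)^T))
                 *m (A *m Q j.+1 - Q j *m (B j)^T) in
     Q j.+2 *m B j.+1 = Xj /\ ((Q j.+2)^T == Xj^T)%MS /\ row_free (B j.+1)) ->
  (* perturbations *)
  let hk := P1 *m (A *m v k - v k *m alpha k - v k.-1 *m (beta k)^T) in
  let hk1 := P1 *m (A *m Q 0%N - v k *m B1^T) in
  let h := fun j => P1 *m A *m Q j.+1 + Q 0%N *m B1 *m (v k)^T *m Q j.+1 in
  let rho := opnorm (invmx Rk) in
  opnorm (hk - W *m W^T *m v k.+1 *m betaFP) <= C * eps * opnorm A /\
  opnorm (hk1 - (- (W *m (invmx Rk)^T *m Sm^T *m rvec k v *m B1^T)))
    <= (1 + rho) * opnorm hk + (1 + rho) * (C * eps * opnorm A) /\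
  (forall j,
    opnorm (h j - Q 0%N *m B1 *m (v k)^T *m Q j.+1)
      <= (1 + rho) * opnorm hk + (1 + rho) * (C * eps * opnorm A)).
Proof.
case: k => // k _ c_ge0.
(* [k.+2 c] accounts for the errors [Delta v_j], [c^2 (2 + c)] for [(I - v_k^T v_k) beta_{k+1}^T]. *)
exists (c * (k.+2%:R + c * (2 + c))), 1.
split; first by rewrite mulr_ge0 // addr_ge0 // mulr_ge0 // addr_ge0.
split=> [|eps m A v alpha beta betaFP dv S Theta f W Rk rw Q B1 B /andP[eps_gt0 eps_le1]
  symA v0 lanczos dv_le vv_le _ _ betaFP_le orthoS diagTheta eigT injf Sm Zm rankZ
  orthoW _ qrZ P1 P2 orthoQ X1 Q0_B1 /andP[Q0_sub _] _ X2 _ /andP[Q1_sub _] _ Q_step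
  hk hk1 h rho]; first exact: ltr01.
have Q_sub := fun j => (andP (Q_step j).2.1).1.
(* Plain [exact]: [v k.+1.-1] in the hypotheses matches [v k] only up to conversion. *)
split; [|split].
- exact (hk_defect_bound v0 lanczos orthoW c_ge0 eps_gt0 dv_le).
- exact (hk1_defect_bound symA v0 lanczos orthoS diagTheta eigT injf rankZ orthoW qrZ
    orthoQ Q0_B1 Q0_sub c_ge0 eps_gt0 eps_le1 dv_le vv_le betaFP_le).
- exact (h_defect_bound symA v0 lanczos orthoS diagTheta eigT injf rankZ orthoW qrZ
    orthoQ Q0_B1 Q0_sub Q1_sub Q_sub c_ge0 eps_gt0 dv_le).
Qed.
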